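(* If $\mathrm{char}(\Bbbk)=3$, then $P$ is minimally generated by $h_1=yz-x^3-y^6z^2+xy^4z^3$, $h_2=z^3+xy^3+x^2yz-y^5z^4$ and $h_3=y^4+xy^2z+x^2z^2-y^4z^5$; in particular $\mu(P)=3$.
   Context: $\Bbbk$ is a field. $\rho:\Bbbk[[x,y,z]]\to\Bbbk[[t]]$ is the $\Bbbk$-algebra morphism with $\rho(x)=t^6+t^{31}$, $\rho(y)=t^8$, $\rho(z)=t^{10}$, and $P=\ker\rho$. $\mu(P)$ is the minimal number of generators of $P$. *)

From HB Require Import structures.
From mathcomp Require Import all_boot all_order all_algebra.
Set Implicit Arguments. Unset Strict Implicit. Unset Printing Implicit Defensive.
Import Order.TTheory GRing.Theory Num.Theory.
Local Open Scope ring_scope.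

(* K[[x,y,z]] : f a b c is the coefficient of x^a y^b z^c *)
Definition ps3 (K : fieldType) := nat -> nat -> nat -> K.
(* K[[t]] : s n is the coefficient of t^n *)
Definition ps1 (K : fieldType) := nat -> K.

Definition ps3add (K : fieldType) (f g : ps3 K) : ps3 K :=
  fun a b c => f a b c + g a b c.
Definition ps3mul (K : fieldType) (f g : ps3 K) : ps3 K :=
  fun a b c => \sum_(i < a.+1) \sum_(j < b.+1) \sum_(l < c.+1)
                 f i j l * g (a - i)%N (b - j)%N (c - l)%N.
Definition mono3 (K : fieldType) (cm : K) (a b c : nat) : ps3 K :=
  fun i j l => if [&& i == a, j == b & l == c] then cm else 0.

Definition ps1add (K : fieldType) (s u : ps1 K) : ps1 K := fun n => s n + u n.
Definition ps1mul (K : fieldType) (s u : ps1 K) : ps1 K :=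
  fun n => \sum_(i < n.+1) s i * u (n - i)%N.
Definition ps1one (K : fieldType) : ps1 K := fun n => if n == 0%N then 1 else 0.
Definition ps1pow (K : fieldType) (s : ps1 K) (m : nat) : ps1 K :=
  iter m (ps1mul s) (@ps1one K).
Definition tpow (K : fieldType) (m : nat) : ps1 K := fun n => if n == m then 1 else 0.

Definition rho_x (K : fieldType) : ps1 K := ps1add (tpow K 6) (tpow K 31).
Definition rho_y (K : fieldType) : ps1 K := tpow K 8.
Definition rho_z (K : fieldType) : ps1 K := tpow K 10.

(* rho : K[[x,y,z]] -> K[[t]], the K-algebra morphism x |-> t^6+t^31,
   y |-> t^8, z |-> t^10, i.e. rho f = sum_{a,b,c} f_{abc} rho_x^a rho_y^b rho_z^c.
   Since rho_x^a rho_y^b rho_z^c has t-order 6a+8b+10c, only the terms with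
   a,b,c <= n contribute to the coefficient of t^n. *)
Definition rho (K : fieldType) (f : ps3 K) : ps1 K :=
  fun n => \sum_(a < n.+1) \sum_(b < n.+1) \sum_(c < n.+1)
    f a b c * ps1mul (ps1mul (ps1pow (rho_x K) a) (ps1pow (rho_y K) b))
                     (ps1pow (rho_z K) c) n.

Definition inP (K : fieldType) (f : ps3 K) : Prop := forall n, rho f n = 0.

Definition h1 (K : fieldType) : ps3 K :=
  ps3add (ps3add (ps3add (mono3 1 0 1 1) (mono3 (-1) 3 0 0))
                 (mono3 (-1) 0 6 2)) (mono3 1 1 4 3).
Definition h2 (K : fieldType) : ps3 K :=
  ps3add (ps3add (ps3add (mono3 1 0 0 3) (mono3 1 1 3 0))
                 (mono3 1 2 1 1)) (mono3 (-1) 0 5 4).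
Definition h3 (K : fieldType) : ps3 K :=
  ps3add (ps3add (ps3add (mono3 1 0 4 0) (mono3 1 1 2 1))
                 (mono3 1 2 0 2)) (mono3 (-1) 0 4 5).

From HB Require Import structures.
From mathcomp Require Import all_boot all_order all_algebra.
From mathcomp Require Import boolp.
From mathcomp Require Import ring zify.
Set Implicit Arguments. Unset Strict Implicit. Unset Printing Implicit Defensive.
Import GRing.Theory.
Local Open Scope ring_scope.

(* Modulo y the generators h1, h2, h3 reduce to -x^3, z^3 and x^2 z^2, so
   dividing by them one power of y at a time writes any f as
   g1 h1 + g2 h2 + g3 h3 + r, where r only involves the monomials x^a y^b z^c
   with x^a z^c outside (x^3, z^3, x^2 z^2).  For such an r the image rho r
   splits into eight "columns" t^(6a+10c) (1 + t^25)^a (sum_b r_abc t^(8b));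
   comparing exponents modulo 8 shows that rho r = 0 forces r = 0 (this uses
   2 != 0).  Conversely rho h_i is 3 times a polynomial, hence 0.
   For minimality, the coefficients of yz, z^3 and y^4 in g1 h1 + g2 h2 + g3 h3
   are the constant terms of g1, g2, g3, so P / mP is 3-dimensional. *)

Section BigSums.
Variable R : nmodType.

Lemma sum_ord_eq n k (F : 'I_n.+1 -> R) :
  \sum_(i < n.+1) (if (i : nat) == k then F i else 0) =
  if (k <= n)%N then F (inord k) else 0.
Proof.
rewrite -big_mkcond; case: leqP => [kn|nk].
  rewrite (big_pred1 (inord k)) // => i /=.
  by apply/eqP/eqP => [<-|->]; rewrite ?inord_val // inordK.
by rewrite big_pred0 // => i; apply/eqP => ik; have := ltn_ord i; lia.
Qed.

Lemma sum_if_const n (b : bool) (F : 'I_n -> R) :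
  \sum_(i < n) (if b then F i else 0) = if b then \sum_(i < n) F i else 0.
Proof. by case: b; rewrite // big1. Qed.
Lemma sum_ord_widen n m (F : nat -> R) : (n <= m)%N ->
  (forall i, (n <= i < m)%N -> F i = 0) -> \sum_(i < m) F i = \sum_(i < n) F i.
Proof.
move=> nm F0; rewrite -!(big_mkord xpredT F) (big_cat_nat (leq0n n) nm) /=.
by rewrite [X in _ + X]big1_seq ?addr0 // => i; rewrite mem_index_iota => /F0.
Qed.

Lemma sum3_widen n N (F : nat -> nat -> nat -> R) : (n <= N)%N ->
  (forall a b c, (n < a)%N \/ (n < b)%N \/ (n < c)%N -> F a b c = 0) ->
  \sum_(a < N.+1) \sum_(b < N.+1) \sum_(c < N.+1) F a b c =
  \sum_(a < n.+1) \sum_(b < n.+1) \sum_(c < n.+1) F a b c.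
Proof.
move=> nN F0.
rewrite (@sum_ord_widen n.+1 N.+1 (fun a => \sum_(b < N.+1) \sum_(c < N.+1) F a b c)) //;
  last first.
  by move=> a /andP[na _]; rewrite big1 // => b _; rewrite big1 // => c _; apply: F0; left.
apply: eq_bigr => a _.
rewrite (@sum_ord_widen n.+1 N.+1 (fun b => \sum_(c < N.+1) F a b c)) //; last first.
  by move=> b /andP[nb _]; rewrite big1 // => c _; apply: F0; right; left.
apply: eq_bigr => b _.
by rewrite (@sum_ord_widen n.+1 N.+1 (F a b)) // => c /andP[nc _]; apply: F0; right; right.
Qed.

End BigSums.

Section PowerSeriesRing.
Variable K : fieldType.
Local Notation PP := {poly {poly {poly K}}}.
Implicit Types (f g h : ps3 K) (p q : PP).

Definition ps3_of_poly p : ps3 K := fun a b c => p`_a`_b`_c.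

Definition trunc3 N f : PP :=
  \poly_(a < N.+1) \poly_(b < N.+1) \poly_(c < N.+1) f a b c.

Definition ps3zero : ps3 K := fun _ _ _ => 0.
Definition ps3opp f : ps3 K := fun a b c => - f a b c.
Definition ps3one : ps3 K := mono3 1 0 0 0.

Lemma ps3_ext f g : (forall a b c, f a b c = g a b c) -> f = g.
Proof. by move=> fg; do 3 apply: funext => ?; exact: fg. Qed.

Lemma ps3_of_polyM p q : ps3_of_poly (p * q) = ps3mul (ps3_of_poly p) (ps3_of_poly q).
Proof.
apply: ps3_ext => a b c; rewrite /ps3_of_poly /ps3mul coefM !coef_sum.
apply: eq_bigr => i _; rewrite coefM !coef_sum; apply: eq_bigr => j _.
by rewrite coefM.
Qed.

Lemma coef_trunc3 N f a b c : (a <= N)%N -> (b <= N)%N -> (c <= N)%N ->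
  ps3_of_poly (trunc3 N f) a b c = f a b c.
Proof.
move=> aN bN cN.
by rewrite /ps3_of_poly coef_poly ltnS aN coef_poly ltnS bN coef_poly ltnS cN.
Qed.

Lemma coef_trunc3_out N f a b c : (N < a)%N \/ (N < b)%N \/ (N < c)%N ->
  ps3_of_poly (trunc3 N f) a b c = 0.
Proof.
rewrite /ps3_of_poly coef_poly ltnS; case: leqP => aN; last by rewrite !coef0.
rewrite coef_poly ltnS; case: leqP => bN; last by rewrite !coef0.
by rewrite coef_poly ltnS; case: leqP => cN //; lia.
Qed.

Lemma trunc3_ps3_of_poly N p :
  (forall a b c, (N < a)%N \/ (N < b)%N \/ (N < c)%N -> ps3_of_poly p a b c = 0) ->
  trunc3 N (ps3_of_poly p) = p.
Proof.
move=> p_out; apply/polyP => a; rewrite coef_poly ltnS; case: (leqP a N) => aN.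
  apply/polyP => b; rewrite coef_poly ltnS; case: (leqP b N) => bN.
    apply/polyP => c; rewrite coef_poly ltnS; case: (leqP c N) => cN //.
    by rewrite -[RHS]/(ps3_of_poly p a b c) p_out //; right; right.
  by apply/polyP => c; rewrite coef0 -[RHS]/(ps3_of_poly p a b c) p_out //; right; left.
apply/polyP => b; apply/polyP => c.
by rewrite !coef0 -[RHS]/(ps3_of_poly p a b c) p_out //; left.
Qed.

Lemma eq_ps3mul_box f g f' g' a b c :
  (forall i j l, (i <= a)%N -> (j <= b)%N -> (l <= c)%N ->
     f i j l = f' i j l /\ g i j l = g' i j l) ->
  ps3mul f g a b c = ps3mul f' g' a b c.
Proof.
move=> fg; apply: eq_bigr => [[i ia]] _; apply: eq_bigr => [[j jb]] _.
apply: eq_bigr => [[l lc]] _ /=.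
have [-> _] := fg i j l ia jb lc.
by have [_ ->] := fg (a - i)%N (b - j)%N (c - l)%N (leq_subr _ _) (leq_subr _ _) (leq_subr _ _).
Qed.

Lemma ps3mul_trunc3 N f g a b c : (a <= N)%N -> (b <= N)%N -> (c <= N)%N ->
  ps3mul f g a b c = ps3_of_poly (trunc3 N f * trunc3 N g) a b c.
Proof.
move=> aN bN cN; rewrite ps3_of_polyM; apply: eq_ps3mul_box => i j l ia jb lc.
by rewrite !coef_trunc3 //; lia.
Qed.

Lemma ps3mul3_trunc3 N f g h a b c : (a <= N)%N -> (b <= N)%N -> (c <= N)%N ->
  ps3mul f (ps3mul g h) a b c =
  ps3_of_poly (trunc3 N f * (trunc3 N g * trunc3 N h)) a b c.
Proof.
move=> aN bN cN; rewrite ps3_of_polyM; apply: eq_ps3mul_box => i j l ia jb lc.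
by rewrite coef_trunc3 -?ps3mul_trunc3 //; lia.
Qed.

Lemma ps3mulC f g : ps3mul f g = ps3mul g f.
Proof.
apply: ps3_ext => a b c; set N := maxn a (maxn b c).
have [aN bN cN] : [/\ a <= N, b <= N & c <= N]%N by rewrite /N; split; lia.
by rewrite !(@ps3mul_trunc3 N) // mulrC.
Qed.

Lemma ps3mulA f g h : ps3mul f (ps3mul g h) = ps3mul (ps3mul f g) h.
Proof.
apply: ps3_ext => a b c; set N := maxn a (maxn b c).
have [aN bN cN] : [/\ a <= N, b <= N & c <= N]%N by rewrite /N; split; lia.
by rewrite (ps3mulC (ps3mul f g) h) !(@ps3mul3_trunc3 N) // [in RHS]mulrC mulrA.
Qed.

Lemma ps3mulDl f g h : ps3mul (ps3add f g) h = ps3add (ps3mul f h) (ps3mul g h).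
Proof.
apply: ps3_ext => a b c; rewrite /ps3mul /ps3add -!big_split /=.
apply: eq_bigr => i _; rewrite -!big_split; apply: eq_bigr => j _.
by rewrite -!big_split; apply: eq_bigr => l _; rewrite mulrDl.
Qed.

Lemma sum3_mono3 m n k cm a0 b0 c0 (E : nat -> nat -> nat -> K) :
  \sum_(a < m.+1) \sum_(b < n.+1) \sum_(c < k.+1) mono3 cm a0 b0 c0 a b c * E a b c =
  if [&& (a0 <= m)%N, (b0 <= n)%N & (c0 <= k)%N] then cm * E a0 b0 c0 else 0.
Proof.
have split_if a b c : mono3 cm a0 b0 c0 a b c * E a b c =
    if a == a0 then if b == b0 then if c == c0 then cm * E a b c else 0 else 0 else 0.
  by rewrite /mono3; case: (a =P a0); case: (b =P b0); case: (c =P c0); rewrite /= ?mul0r.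
under eq_bigr => a _ do under eq_bigr => b _ do under eq_bigr => c _ do rewrite split_if.
under eq_bigr => a _ do under eq_bigr => b _ do rewrite sum_if_const.
under eq_bigr => a _ do rewrite sum_if_const.
rewrite sum_ord_eq; case: leqP => //= a0m; rewrite inordK //.
under eq_bigr => b _ do rewrite sum_if_const.
rewrite sum_ord_eq; case: leqP => //= b0n; rewrite inordK //.
by rewrite sum_ord_eq; case: leqP => // c0k; rewrite inordK.
Qed.

Lemma ps3mul_mono3l cm i0 j0 l0 f a b c :
  ps3mul (mono3 cm i0 j0 l0) f a b c =
  if [&& (i0 <= a)%N, (j0 <= b)%N & (l0 <= c)%N]
  then cm * f (a - i0)%N (b - j0)%N (c - l0)%N else 0.
Proof. exact: (sum3_mono3 _ _ _ _ _ _ _ (fun i j l => f (a - i) (b - j) (c - l))%N). Qed.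

Lemma ps3mul1 f : ps3mul ps3one f = f.
Proof. by apply: ps3_ext => a b c; rewrite ps3mul_mono3l /= mul1r !subn0. Qed.

Lemma ps3addA f g h : ps3add f (ps3add g h) = ps3add (ps3add f g) h.
Proof. by apply: ps3_ext => a b c; rewrite /ps3add addrA. Qed.

Lemma ps3addC f g : ps3add f g = ps3add g f.
Proof. by apply: ps3_ext => a b c; rewrite /ps3add addrC. Qed.

Lemma ps3add0 f : ps3add ps3zero f = f.
Proof. by apply: ps3_ext => a b c; rewrite /ps3add add0r. Qed.

Lemma ps3addN f : ps3add (ps3opp f) f = ps3zero.
Proof. by apply: ps3_ext => a b c; rewrite /ps3add addNr. Qed.

Lemma ps3one_neq0 : ps3one != ps3zero.
Proof.
apply/eqP => /(congr1 (fun f => f 0%N 0%N 0%N)).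
by rewrite /ps3one /mono3 /=; apply/eqP/oner_neq0.
Qed.
End PowerSeriesRing.

HB.instance Definition _ (K : fieldType) := Choice.on (ps3 K).
HB.instance Definition _ (K : fieldType) := GRing.isZmodule.Build (ps3 K)
  (@ps3addA K) (@ps3addC K) (@ps3add0 K) (@ps3addN K).
HB.instance Definition _ (K : fieldType) := GRing.Zmodule_isComNzRing.Build (ps3 K)
  (@ps3mulA K) (@ps3mulC K) (@ps3mul1 K) (@ps3mulDl K) (@ps3one_neq0 K).

Section PowerSeriesRingTheory.
Variable K : fieldType.
Implicit Types (f g : ps3 K) (cm : K).

Lemma addps3E f g a b c : (f + g) a b c = f a b c + g a b c. Proof. by []. Qed.
Lemma oppps3E f a b c : (- f) a b c = - f a b c. Proof. by []. Qed.
Lemma mulps3E f g a b c : (f * g) a b c = ps3mul f g a b c. Proof. by []. Qed.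

Lemma sumps3E I (r : seq I) (P : pred I) (F : I -> ps3 K) a b c :
  (\sum_(i <- r | P i) F i) a b c = \sum_(i <- r | P i) F i a b c.
Proof. exact: (big_morph (fun f : ps3 K => f a b c)). Qed.

Lemma mono3N cm a b c : mono3 (- cm) a b c = - mono3 cm a b c.
Proof. by apply: ps3_ext => i j l; rewrite oppps3E /mono3; case: ifP; rewrite ?oppr0. Qed.

Lemma mono3M cm a b c cm' a' b' c' :
  mono3 cm a b c * mono3 cm' a' b' c' = mono3 (cm * cm') (a + a') (b + b') (c + c').
Proof.
apply: ps3_ext => i j l; rewrite mulps3E ps3mul_mono3l /mono3.
have le_sub_eq x y z : (x <= y)%N && ((y - x)%N == z) = (y == (x + z)%N).
  by case: (leqP x y) => xy /=; apply/eqP/eqP => //; lia.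
rewrite -le_sub_eq -(le_sub_eq b j b') -(le_sub_eq c l c').
case: (a <= i)%N; case: (b <= j)%N; case: (c <= l)%N; rewrite //= ?andbF //.
by case: ifP; rewrite ?mulr0.
Qed.
End PowerSeriesRingTheory.

Section RhoMorphism.
Variable K : fieldType.
Implicit Types (f g : ps3 K) (p q : {poly K}).

Definition ps1_of_poly p : ps1 K := fun n => p`_n.

Lemma ps1_ext (s u : ps1 K) : (forall n, s n = u n) -> s = u.
Proof. exact: funext. Qed.

Lemma ps1_of_polyM p q : ps1mul (ps1_of_poly p) (ps1_of_poly q) = ps1_of_poly (p * q).
Proof. by apply: ps1_ext => n; rewrite /ps1_of_poly coefM. Qed.

Lemma ps1_of_polyD p q : ps1add (ps1_of_poly p) (ps1_of_poly q) = ps1_of_poly (p + q).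
Proof. by apply: ps1_ext => n; rewrite /ps1_of_poly coefD. Qed.

Lemma ps1_of_polyXn m : tpow K m = ps1_of_poly 'X^m.
Proof. by apply: ps1_ext => n; rewrite /ps1_of_poly /tpow coefXn; case: eqP. Qed.

Lemma ps1pow_of_poly p k : ps1pow (ps1_of_poly p) k = ps1_of_poly (p ^+ k).
Proof.
elim: k => [|k IH].
  by apply: ps1_ext => n; rewrite /ps1_of_poly /ps1pow /ps1one /= coef1; case: eqP.
by rewrite /ps1pow iterS -/(ps1pow _ _) IH ps1_of_polyM exprS.
Qed.

Definition rho_mon a b c : {poly K} := ('X^6 + 'X^31) ^+ a * 'X^8 ^+ b * 'X^10 ^+ c.

Lemma rho_mon_coef f n : rho f n =
  \sum_(a < n.+1) \sum_(b < n.+1) \sum_(c < n.+1) f a b c * (rho_mon a b c)`_n.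
Proof.
apply: eq_bigr => a _; apply: eq_bigr => b _; apply: eq_bigr => c _.
rewrite /rho_x /rho_y /rho_z !ps1_of_polyXn ps1_of_polyD !ps1pow_of_poly.
by rewrite !ps1_of_polyM.
Qed.

(* x, y and z map to series of t-order at least 1. *)
Lemma coef_rho_mon_small a b c n : (n < a + b + c)%N -> (rho_mon a b c)`_n = 0.
Proof.
move=> small; suff -> : rho_mon a b c =
    'X^(a + b + c) * (('X^5 + 'X^30) ^+ a * 'X^7 ^+ b * 'X^9 ^+ c).
  by rewrite coefXnM small.
rewrite /rho_mon.
have -> : ('X^6 + 'X^31 : {poly K}) = 'X * ('X^5 + 'X^30) by ring.
have -> : ('X^8 : {poly K}) = 'X * 'X^7 by ring.
have -> : ('X^10 : {poly K}) = 'X * 'X^9 by ring.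
by rewrite !exprMn !exprD; ring.
Qed.

Lemma comm_rho_y : commr_rmorph (comp_poly ('X^10 : {poly K})) 'X^8.
Proof. by move=> p; rewrite /GRing.comm mulrC. Qed.
Local Notation eval_yz := (horner_morph comm_rho_y).

Lemma comm_rho_x : commr_rmorph eval_yz ('X^6 + 'X^31).
Proof. by move=> p; rewrite /GRing.comm mulrC. Qed.
(* The polynomial substitution x |-> t^6 + t^31, y |-> t^8, z |-> t^10. *)
Local Notation eval_rho := (horner_morph comm_rho_x).

Lemma eval_rho_trunc3 N f : eval_rho (trunc3 N f) =
  \sum_(a < N.+1) \sum_(b < N.+1) \sum_(c < N.+1) (f a b c)%:P * rho_mon a b c.
Proof.
rewrite /trunc3 poly_def rmorph_sum /=; apply: eq_bigr => a _.
rewrite -mul_polyC rmorphM /= horner_morphC rmorphXn /= horner_morphX.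
rewrite poly_def rmorph_sum mulr_suml /=; apply: eq_bigr => b _.
rewrite -mul_polyC rmorphM /= horner_morphC rmorphXn /= horner_morphX.
rewrite poly_def rmorph_sum !mulr_suml /=; apply: eq_bigr => c _.
rewrite -mul_polyC rmorphM /= comp_polyC rmorphXn /= comp_polyX /rho_mon.
ring.
Qed.

Lemma rho_trunc3 N f n : (n <= N)%N -> rho f n = (eval_rho (trunc3 N f))`_n.
Proof.
move=> nN; rewrite eval_rho_trunc3 rho_mon_coef coef_sum.
under [RHS]eq_bigr => a _ do rewrite coef_sum.
under [RHS]eq_bigr => a _ do under eq_bigr => b _ do rewrite coef_sum.
under [RHS]eq_bigr => a _ do under eq_bigr => b _ do under eq_bigr => c _ do rewrite coefCM.
rewrite (@sum3_widen _ n N (fun a b c => f a b c * (rho_mon a b c)`_n)) // => a b c big.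
by rewrite coef_rho_mon_small ?mulr0 //; lia.
Qed.

Lemma eq_rho_box f g n :
  (forall a b c, (a <= n)%N -> (b <= n)%N -> (c <= n)%N -> f a b c = g a b c) ->
  rho f n = rho g n.
Proof.
move=> fg; apply: eq_bigr => a _; apply: eq_bigr => b _; apply: eq_bigr => c _.
by rewrite fg // -ltnS.
Qed.

Lemma rhoD f g : rho (f + g) = ps1add (rho f) (rho g).
Proof.
apply: ps1_ext => n; rewrite /rho /ps1add -big_split; apply: eq_bigr => a _.
rewrite -big_split; apply: eq_bigr => b _; rewrite -big_split; apply: eq_bigr => c _.
exact: mulrDl.
Qed.

Lemma rhoM f g : rho (f * g) = ps1mul (rho f) (rho g).
Proof.
apply: ps1_ext => n; set Tf := trunc3 n f; set Tg := trunc3 n g.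
have rho_fg : rho (f * g) n = rho (ps3_of_poly (Tf * Tg)) n.
  by apply: eq_rho_box => a b c an bn cn; rewrite -ps3mul_trunc3.
have trunc_fg : trunc3 (n + n) (ps3_of_poly (Tf * Tg)) = Tf * Tg.
  apply: trunc3_ps3_of_poly => a b c big; rewrite ps3_of_polyM.
  apply: big1 => [[i ia]] _; apply: big1 => [[j jb]] _; apply: big1 => [[l lc]] _ /=.
  have [out|out] : ((n < i)%N \/ (n < j)%N \/ (n < l)%N) \/
    ((n < a - i)%N \/ (n < b - j)%N \/ (n < c - l)%N) by lia.
    by rewrite coef_trunc3_out ?mul0r.
  by rewrite [X in _ * X]coef_trunc3_out ?mulr0.
rewrite rho_fg (@rho_trunc3 (n + n)) ?leq_addr // trunc_fg rmorphM coefM.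
apply: eq_bigr => i _; have ni : (i <= n)%N by rewrite -ltnS.
by rewrite (@rho_trunc3 n f i ni) (@rho_trunc3 n g (n - i)%N (leq_subr _ _)).
Qed.

Lemma rho_mono3 cm a b c : rho (mono3 cm a b c) = ps1_of_poly (cm *: rho_mon a b c).
Proof.
apply: ps1_ext => n; rewrite rho_mon_coef /ps1_of_poly coefZ.
rewrite (sum3_mono3 _ _ _ _ _ _ _ (fun a b c => (rho_mon a b c)`_n)).
case: ifP => // /negbT out; rewrite coef_rho_mon_small ?mulr0 //.
by move: out; rewrite !negb_and -!ltnNge => /or3P[]; lia.
Qed.
End RhoMorphism.
Arguments rho_mon {K}.

Section KernelElements.
Variable K : fieldType.
Hypothesis char3 : 3%N \in [pchar K].

Lemma natr3_poly : (3%:R : {poly K}) = 0.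
Proof. by rewrite -polyC_natr (pcharf0 char3). Qed.

Lemma rho_h1 : rho (h1 K) = ps1_of_poly 0.
Proof.
rewrite /h1 !rhoD !rho_mono3 !ps1_of_polyD !scaleN1r !scale1r /rho_mon; congr ps1_of_poly.
rewrite [LHS](_ : _ = 3%:R * - ('X^43 + 'X^68)); first by rewrite natr3_poly mul0r.
ring.
Qed.

Lemma rho_h2 : rho (h2 K) = ps1_of_poly 0.
Proof.
rewrite /h2 !rhoD !rho_mono3 !ps1_of_polyD !scaleN1r !scale1r /rho_mon; congr ps1_of_poly.
rewrite [LHS](_ : _ = 3%:R * ('X^30 + 'X^55)); first by rewrite natr3_poly mul0r.
ring.
Qed.

Lemma rho_h3 : rho (h3 K) = ps1_of_poly 0.
Proof.
rewrite /h3 !rhoD !rho_mono3 !ps1_of_polyD !scaleN1r !scale1r /rho_mon; congr ps1_of_poly.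
rewrite [LHS](_ : _ = 3%:R * ('X^32 + 'X^57)); first by rewrite natr3_poly mul0r.
ring.
Qed.

Lemma inP_hcomb (g1 g2 g3 : ps3 K) : inP (g1 * h1 K + g2 * h2 K + g3 * h3 K).
Proof.
have ps1mul0 (s : ps1 K) n : ps1mul s (ps1_of_poly 0) n = 0.
  by apply: big1 => i _; rewrite /ps1_of_poly coef0 mulr0.
by move=> n; rewrite !rhoD !rhoM rho_h1 rho_h2 rho_h3 /ps1add !ps1mul0 !addr0.
Qed.
End KernelElements.

Section Division.
Variable K : fieldType.
Implicit Types (f g : ps3 K) (S : nat -> ps3 K).
Local Notation mon a b c := (@mono3 K 1 a b c).

Lemma mon_y_exp k : mon 0 1 0 ^+ k = mon 0 k 0.
Proof.
elim: k => [|k IH]; first by [].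
by rewrite exprSr IH mono3M mul1r addn1.
Qed.

Definition yfree f := forall a b c, b != 0%N -> f a b c = 0.

Definition shift_y f : ps3 K := fun a b c => f a b.+1 c.

(* The monomials x^a z^c outside the ideal (x^3, z^3, x^2 z^2) of K[[x, z]]. *)
Definition normal_xz a c := [&& (a < 3)%N, (c < 3)%N & ~~ ((a == 2%N) && (c == 2%N))].

(* Division of the y-free part of f by x^3, then z^3, then x^2 z^2. *)
Definition quo_x3 f : ps3 K := fun a b c =>
  if b == 0%N then f (a + 3)%N 0%N c else 0.
Definition quo_z3 f : ps3 K := fun a b c =>
  if (b == 0%N) && (a < 3)%N then f a 0%N (c + 3)%N else 0.
Definition quo_x2z2 f : ps3 K := fun a b c =>
  if [&& a == 0%N, b == 0%N & c == 0%N] then f 2%N 0%N 2%N else 0.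
Definition rem_xz f : ps3 K := fun a b c =>
  if (b == 0%N) && normal_xz a c then f a 0%N c else 0.

Lemma div_xz f : f = mon 3 0 0 * quo_x3 f + mon 0 0 3 * quo_z3 f +
  mon 2 0 2 * quo_x2z2 f + rem_xz f + mon 0 1 0 * shift_y f.
Proof.
apply: ps3_ext => a b c; rewrite !addps3E !mulps3E !ps3mul_mono3l /shift_y.
rewrite /quo_x3 /quo_z3 /quo_x2z2 /rem_xz /normal_xz !subn0 !mul1r.
case: b => [|b] /=; last by rewrite !andbF /= !if_same subn1 !add0r.
rewrite !andbT addr0; case: (ltnP a 3) => a3.
  case: (ltnP c 3) => c3.
    move: a3 c3; case: a => [|[|[|a]]] //; case: c => [|[|[|c]]] //= _ _;
      by rewrite ?addr0 ?add0r.
  rewrite /= subnK // (_ : (c - 2 == 0)%N = false) ?andbF /= ?if_same ?add0r ?addr0 //.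
  by apply/eqP; lia.
rewrite /= subnK // if_same (_ : (a - 2 == 0)%N = false) /= ?if_same ?addr0 //.
by apply/eqP; lia.
Qed.

Definition h1_ytail : ps3 K := mon 0 0 1 - mon 0 5 2 + mon 1 3 3.
Definition h2_ytail : ps3 K := mon 1 2 0 + mon 2 0 1 - mon 0 4 4.
Definition h3_ytail : ps3 K := mon 0 3 0 + mon 1 1 1 - mon 0 3 5.

Lemma h1_ysplit : h1 K = - mon 3 0 0 + mon 0 1 0 * h1_ytail.
Proof.
have -> : h1 K = mon 0 1 1 + mono3 (-1) 3 0 0 + mono3 (-1) 0 6 2 + mon 1 4 3 by [].
by rewrite /h1_ytail !mulrDr !mulrN !mono3M !mul1r !mono3N /=; ring.
Qed.

Lemma h2_ysplit : h2 K = mon 0 0 3 + mon 0 1 0 * h2_ytail.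
Proof.
have -> : h2 K = mon 0 0 3 + mon 1 3 0 + mon 2 1 1 + mono3 (-1) 0 5 4 by [].
by rewrite /h2_ytail !mulrDr !mulrN !mono3M !mul1r !mono3N /=; ring.
Qed.

Lemma h3_ysplit : h3 K = mon 2 0 2 + mon 0 1 0 * h3_ytail.
Proof.
have -> : h3 K = mon 0 4 0 + mon 1 2 1 + mon 2 0 2 + mono3 (-1) 0 4 5 by [].
by rewrite /h3_ytail !mulrDr !mulrN !mono3M !mul1r !mono3N /=; ring.
Qed.

Definition div_next g : ps3 K :=
  shift_y g + quo_x3 g * h1_ytail - quo_z3 g * h2_ytail - quo_x2z2 g * h3_ytail.

Definition div_head g : ps3 K :=
  - quo_x3 g * h1 K + quo_z3 g * h2 K + quo_x2z2 g * h3 K + rem_xz g.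

Lemma div_step g : g = div_head g + mon 0 1 0 * div_next g.
Proof.
by rewrite {1}(div_xz g) /div_head /div_next h1_ysplit h2_ysplit h3_ysplit; ring.
Qed.

Lemma yfreeN f : yfree f -> yfree (- f).
Proof. by move=> yf a b c /yf; rewrite oppps3E => ->; rewrite oppr0. Qed.

Lemma yfree_quo_x3 g : yfree (quo_x3 g).
Proof. by move=> a b c /negbTE b0; rewrite /quo_x3 b0. Qed.

Lemma yfree_quo_z3 g : yfree (quo_z3 g).
Proof. by move=> a b c /negbTE b0; rewrite /quo_z3 b0. Qed.

Lemma yfree_quo_x2z2 g : yfree (quo_x2z2 g).
Proof. by move=> a b c /negbTE b0; rewrite /quo_x2z2 b0 andbF. Qed.

Lemma yfree_rem_xz g : yfree (rem_xz g).
Proof. by move=> a b c /negbTE b0; rewrite /rem_xz b0. Qed.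

Definition div_iter f k := iter k div_next f.

Lemma div_partial f N : f =
  \sum_(k < N) mon 0 1 0 ^+ k * div_head (div_iter f k) + mon 0 1 0 ^+ N * div_iter f N.
Proof.
elim: N => [|N IH]; first by rewrite big_ord0 add0r expr0 mul1r.
rewrite big_ord_recr /= {1}IH {1}(div_step (div_iter f N)) exprSr; ring.
Qed.

(* For y-free S k, this is the series sum_k y^k S k. *)
Definition sum_ypow S : ps3 K := fun a b c => S b a 0%N c.

Lemma sum_ypowE S N a b c : (forall k, yfree (S k)) -> (b < N)%N ->
  (\sum_(k < N) mon 0 1 0 ^+ k * S k) a b c = sum_ypow S a b c.
Proof.
move=> Sy; case: N => // N bN; rewrite sumps3E /sum_ypow.
under eq_bigr => k _ do rewrite mon_y_exp mulps3E ps3mul_mono3l /= !subn0 mul1r.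
transitivity (\sum_(k < N.+1) (if (k : nat) == b then S b a 0%N c else 0)).
  apply: eq_bigr => k _; case: eqP => [->|kb]; first by rewrite leqnn subnn.
  by case: ifP => // kb'; apply: Sy; apply/eqP; lia.
by rewrite sum_ord_eq -ltnS bN.
Qed.

Lemma mul_sum_ypowE S N h a b c : (forall k, yfree (S k)) -> (b < N)%N ->
  ((\sum_(k < N) mon 0 1 0 ^+ k * S k) * h) a b c = (sum_ypow S * h) a b c.
Proof.
move=> Sy bN; apply: eq_ps3mul_box => i j l _ jb _; split => //.
by apply: sum_ypowE => //; lia.
Qed.

Definition quo_h1 f := sum_ypow (fun k => - quo_x3 (div_iter f k)).
Definition quo_h2 f := sum_ypow (fun k => quo_z3 (div_iter f k)).
Definition quo_h3 f := sum_ypow (fun k => quo_x2z2 (div_iter f k)).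
Definition rem_h f := sum_ypow (fun k => rem_xz (div_iter f k)).

Lemma div_h f : f = quo_h1 f * h1 K + quo_h2 f * h2 K + quo_h3 f * h3 K + rem_h f.
Proof.
apply: ps3_ext => a b c; rewrite {1}(div_partial f b.+1).
have -> : \sum_(k < b.+1) mon 0 1 0 ^+ k * div_head (div_iter f k) =
    (\sum_(k < b.+1) mon 0 1 0 ^+ k * - quo_x3 (div_iter f k)) * h1 K +
    (\sum_(k < b.+1) mon 0 1 0 ^+ k * quo_z3 (div_iter f k)) * h2 K +
    (\sum_(k < b.+1) mon 0 1 0 ^+ k * quo_x2z2 (div_iter f k)) * h3 K +
    (\sum_(k < b.+1) mon 0 1 0 ^+ k * rem_xz (div_iter f k)).
  by rewrite !mulr_suml -!big_split /=; apply: eq_bigr => k _; rewrite /div_head; ring.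
rewrite !addps3E.
have -> : (mon 0 1 0 ^+ b.+1 * div_iter f b.+1) a b c = 0.
  by rewrite mon_y_exp mulps3E ps3mul_mono3l ltnn andbF.
rewrite addr0.
congr (_ + _ + _ + _); [apply: mul_sum_ypowE | apply: mul_sum_ypowE |
  apply: mul_sum_ypowE | apply: sum_ypowE] => // k.
- exact/yfreeN/yfree_quo_x3.
- exact: yfree_quo_z3.
- exact: yfree_quo_x2z2.
- exact: yfree_rem_xz.
Qed.

Lemma rem_h_normal f a b c : ~~ normal_xz a c -> rem_h f a b c = 0.
Proof. by move=> /negbTE nf; rewrite /rem_h /sum_ypow /rem_xz nf andbF. Qed.
End Division.

Section NormalForms.
Variable K : fieldType.
Implicit Types (A : nat -> K) (S : ps1 K).
Local Notation mon a b c := (@mono3 K 1 a b c).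

Definition stretch8 A : ps1 K := fun n => if (8 %| n)%N then A (n %/ 8)%N else 0.

Definition ycol A : ps3 K := fun a b c => if (a == 0%N) && (c == 0%N) then A b else 0.

Lemma rho_ycol A : rho (ycol A) = stretch8 A.
Proof.
apply: ps1_ext => n.
have ycolE a b c : ycol A a b c * (rho_mon a b c)`_n =
    if a == 0%N then if c == 0%N then A b * (n == 8 * b)%N%:R else 0 else 0.
  rewrite /ycol /rho_mon; case: (a =P 0%N) => [->|]; case: (c =P 0%N) => [->|] //=;
    by rewrite ?mul0r // !expr0 mul1r mulr1 -exprM coefXn.
rewrite rho_mon_coef.
under eq_bigr => a _ do under eq_bigr => b _ do under eq_bigr => c _ do rewrite ycolE.
under eq_bigr => a _ do under eq_bigr => b _ do rewrite sum_if_const.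
under eq_bigr => a _ do rewrite sum_if_const.
rewrite sum_ord_eq /=.
under eq_bigr => b _ do rewrite sum_ord_eq /=.
transitivity (\sum_(b < n.+1) (if (b : nat) == (n %/ 8)%N then
                                 (if (8 %| n)%N then A b else 0) else 0)).
  apply: eq_bigr => b _; have [->|bn] := eqVneq (b : nat) (n %/ 8)%N.
    case: ifP => [/divnK|n8]; first by rewrite mulnC => ->; rewrite eqxx mulr1.
    rewrite (_ : (n == 8 * (n %/ 8))%N = false) ?mulr0 //.
    by apply: contraFF n8 => /eqP ->; apply: dvdn_mulr.
  rewrite (_ : (n == 8 * b)%N = false) ?mulr0 //.
  by apply: contraNF bn => /eqP/(congr1 (divn^~ 8%N)); rewrite mulKn // => ->.
rewrite sum_ord_eq leq_div /stretch8; case: ifP => // _.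
by rewrite inordK // ltnS leq_div.
Qed.

Lemma ps1mul_XnE e S n :
  ps1mul (ps1_of_poly 'X^e) S n = if (e <= n)%N then S (n - e)%N else 0.
Proof.
transitivity (\sum_(i < n.+1) (if (i : nat) == e then S (n - i)%N else 0)).
  by apply: eq_bigr => i _; rewrite /ps1_of_poly coefXn; case: eqP; rewrite ?mul1r ?mul0r.
by rewrite sum_ord_eq; case: leqP => // en; rewrite inordK // ltnS.
Qed.

Lemma ps1mulDl p q S n :
  ps1mul (ps1_of_poly (p + q)) S n = ps1mul (ps1_of_poly p) S n + ps1mul (ps1_of_poly q) S n.
Proof. by rewrite -big_split; apply: eq_bigr => i _; rewrite /ps1_of_poly coefD mulrDl. Qed.

(* The coefficient of t^n in t^e * stretch8 A. *)
Definition tshift8 A e n := if (e <= n)%N then stretch8 A (n - e)%N else 0.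

Lemma tshift8_hit A e b n : n = (b * 8 + e)%N -> tshift8 A e n = A b.
Proof. by move=> ->; rewrite /tshift8 /stretch8 leq_addl addnK dvdn_mull // mulnK. Qed.

Lemma tshift8_miss A e b m : (m %% 8 == e %% 8)%N = false -> tshift8 A e (b * 8 + m) = 0.
Proof.
move=> me; rewrite /tshift8 /stretch8; case: ifP => // em; case: ifP => // dvd.
by move: me; rewrite -(modnMDl b m 8) eqn_mod_dvd // dvd.
Qed.

Lemma tshift8_eq0 A e n : (forall b, A b = 0) -> tshift8 A e n = 0.
Proof. by move=> A0; rewrite /tshift8 /stretch8 A0 !if_same. Qed.

Variable r : ps3 K.
Hypothesis r_normal : forall a b c, ~~ normal_xz a c -> r a b c = 0.
Local Notation col a c := (fun b => r a b c).

Lemma normal_ycol_decomp : r =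
  ycol (col 0 0) + mon 1 0 0 * ycol (col 1 0) + mon 2 0 0 * ycol (col 2 0) +
  mon 0 0 1 * ycol (col 0 1) + mon 1 0 1 * ycol (col 1 1) + mon 2 0 1 * ycol (col 2 1) +
  mon 0 0 2 * ycol (col 0 2) + mon 1 0 2 * ycol (col 1 2).
Proof.
apply: ps3_ext => a b c; rewrite !addps3E !mulps3E !ps3mul_mono3l /ycol.
have [a3|a3] := ltnP a 3; last first.
  rewrite [LHS]r_normal; last by rewrite /normal_xz ltnNge a3.
  have a_sub k : (k < 3)%N -> (a - k == 0)%N = false by move=> k3; apply/eqP; lia.
  have a0 : (a == 0%N) = false by apply/eqP; lia.
  by rewrite a0 !a_sub //= !mulr0 !if_same !addr0.
have [c3|c3] := ltnP c 3; last first.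
  rewrite [LHS]r_normal; last by rewrite /normal_xz (ltnNge c) c3 andbF.
  have c_sub k : (k < 3)%N -> (c - k == 0)%N = false by move=> k3; apply/eqP; lia.
  have c0 : (c == 0%N) = false by apply/eqP; lia.
  by rewrite c0 !c_sub //= !andbF /= !mulr0 !if_same !addr0.
move: a3 c3; case: a => [|[|[|a]]] //; case: c => [|[|[|c]]] // _ _ /=;
  rewrite ?mul1r ?mulr0 ?addr0 ?add0r ?subn0 //.
by rewrite r_normal.
Qed.

Lemma rho_normal n : rho r n =
  tshift8 (col 0 0) 0 n + (tshift8 (col 1 0) 6 n + tshift8 (col 1 0) 31 n) +
  (tshift8 (col 2 0) 12 n + tshift8 (col 2 0) 37 n + tshift8 (col 2 0) 37 n +
   tshift8 (col 2 0) 62 n) +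
  tshift8 (col 0 1) 10 n + (tshift8 (col 1 1) 16 n + tshift8 (col 1 1) 41 n) +
  (tshift8 (col 2 1) 22 n + tshift8 (col 2 1) 47 n + tshift8 (col 2 1) 47 n +
   tshift8 (col 2 1) 72 n) +
  tshift8 (col 0 2) 20 n + (tshift8 (col 1 2) 26 n + tshift8 (col 1 2) 51 n).
Proof.
rewrite {1}normal_ycol_decomp !rhoD !rhoM /ps1add !rho_mono3 !rho_ycol !scale1r /rho_mon.
rewrite /tshift8 subn0.
have -> : ('X^6 + 'X^31 : {poly K}) ^+ 1 * 'X^8 ^+ 0 * 'X^10 ^+ 0 = 'X^6 + 'X^31 by ring.
have -> : ('X^6 + 'X^31 : {poly K}) ^+ 2 * 'X^8 ^+ 0 * 'X^10 ^+ 0 =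
  'X^12 + 'X^37 + 'X^37 + 'X^62 by ring.
have -> : ('X^6 + 'X^31 : {poly K}) ^+ 0 * 'X^8 ^+ 0 * 'X^10 ^+ 1 = 'X^10 by ring.
have -> : ('X^6 + 'X^31 : {poly K}) ^+ 1 * 'X^8 ^+ 0 * 'X^10 ^+ 1 = 'X^16 + 'X^41 by ring.
have -> : ('X^6 + 'X^31 : {poly K}) ^+ 2 * 'X^8 ^+ 0 * 'X^10 ^+ 1 =
  'X^22 + 'X^47 + 'X^47 + 'X^72 by ring.
have -> : ('X^6 + 'X^31 : {poly K}) ^+ 0 * 'X^8 ^+ 0 * 'X^10 ^+ 2 = 'X^20 by ring.
have -> : ('X^6 + 'X^31 : {poly K}) ^+ 1 * 'X^8 ^+ 0 * 'X^10 ^+ 2 = 'X^26 + 'X^51 by ring.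
by rewrite !ps1mulDl !ps1mul_XnE.
Qed.

Hypothesis r_ker : inP r.
Hypothesis two_neq0 : (2%:R : K) != 0.

(* Each column is read off a residue class of exponents modulo 8 where it is
   the only (or the last remaining) contribution. *)
Lemma col11_eq0 b : r 1 b 1 = 0.
Proof.
have := r_ker (b * 8 + 41); rewrite rho_normal (tshift8_hit _ (erefl _)).
by rewrite !tshift8_miss // !addr0 !add0r.
Qed.

Lemma col12_eq0 b : r 1 b 2 = 0.
Proof.
have := r_ker (b * 8 + 51); rewrite rho_normal (tshift8_hit _ (erefl _)).
by rewrite !tshift8_miss // !addr0 !add0r.
Qed.

Lemma col20_eq0 b : r 2 b 0 = 0.
Proof.
have := r_ker (b * 8 + 37); rewrite rho_normal (tshift8_hit _ (erefl _)).
rewrite !tshift8_miss // !addr0 !add0r => E.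
by apply: (mulIf two_neq0); rewrite mul0r mulr_natr mulr2n.
Qed.

Lemma col01_eq0 b : r 0 b 1 = 0.
Proof.
have := r_ker (b * 8 + 10); rewrite rho_normal (tshift8_hit _ (erefl _)).
by rewrite !(tshift8_eq0 _ _ col12_eq0) !tshift8_miss // !addr0 !add0r.
Qed.

Lemma col02_eq0 b : r 0 b 2 = 0.
Proof.
have := r_ker (b * 8 + 20); rewrite rho_normal (tshift8_hit _ (erefl _)).
by rewrite !(tshift8_eq0 _ _ col20_eq0) !tshift8_miss // !addr0 !add0r.
Qed.

(* Residues 6 and 7 both see col 1 0 and col 2 1, with multiplicities 1, 1
   and 1, 2. *)
Lemma col21_eq0 b : r 2 b 1 = 0.
Proof.
have := r_ker (b * 8 + 22); have := r_ker (b * 8 + 47).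
rewrite !rho_normal (tshift8_hit _ (erefl (b * 8 + 22)%N)).
rewrite (tshift8_hit _ (erefl (b * 8 + 47)%N)).
rewrite (@tshift8_hit _ 6 (b + 2) (b * 8 + 22)); last lia.
rewrite (@tshift8_hit _ 31 (b + 2) (b * 8 + 47)); last lia.
rewrite !(tshift8_eq0 _ _ col20_eq0) !tshift8_miss // !addr0 !add0r => E47 E22.
by move: E47; rewrite addrA E22 add0r.
Qed.

Lemma col10_eq0 b : r 1 b 0 = 0.
Proof.
have := r_ker (b * 8 + 6); rewrite rho_normal (tshift8_hit _ (erefl _)).
rewrite !(tshift8_eq0 _ _ col20_eq0) !(tshift8_eq0 _ _ col21_eq0).
by rewrite !tshift8_miss // !addr0 !add0r.
Qed.

Lemma col00_eq0 b : r 0 b 0 = 0.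
Proof.
have := r_ker (b * 8 + 0); rewrite rho_normal (tshift8_hit _ (erefl _)).
rewrite !(tshift8_eq0 _ _ col11_eq0) !(tshift8_eq0 _ _ col21_eq0).
by rewrite !tshift8_miss // ?addr0 ?add0r.
Qed.

Lemma normal_ker_eq0 : r = 0.
Proof.
apply: ps3_ext => a b c; have [nf|/r_normal //] := boolP (normal_xz a c).
move: nf; rewrite /normal_xz; case: a => [|[|[|a]]] //; case: c => [|[|[|c]]] //= _.
- exact: col00_eq0.
- exact: col01_eq0.
- exact: col02_eq0.
- exact: col10_eq0.
- exact: col11_eq0.
- exact: col12_eq0.
- exact: col20_eq0.
- exact: col21_eq0.
Qed.
End NormalForms.

Section Generators.
Variable K : fieldType.
Implicit Types f g q : ps3 K.

Definition hcomb g1 g2 g3 := g1 * h1 K + g2 * h2 K + g3 * h3 K.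

Lemma char3_two_neq0 : 3%N \in [pchar K] -> (2%:R : K) != 0.
Proof.
move=> char3; apply/eqP => two0; have := pcharf0 char3.
by rewrite (natrD _ 2 1) two0 add0r => /eqP; rewrite oner_eq0.
Qed.

Lemma inP_hcombP f : 3%N \in [pchar K] ->
  inP f <-> exists g1 g2 g3, f = hcomb g1 g2 g3.
Proof.
move=> char3; split=> [fP|[g1 [g2 [g3 ->]]]]; last exact: inP_hcomb.
exists (quo_h1 f), (quo_h2 f), (quo_h3 f).
suff rem0 : rem_h f = 0 by rewrite {1}(div_h f) rem0 addr0.
apply: normal_ker_eq0 (char3_two_neq0 char3) => [a b c /rem_h_normal //|n].
by have := fP n; rewrite {1}(div_h f) rhoD /ps1add (inP_hcomb char3) add0r.
Qed.

(* The coefficients of yz, z^3 and y^4: each of these monomials is divisible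
   by exactly one monomial of h1, h2, h3, namely by itself. *)
Definition hcoord f : 'rV[K]_3 := \row_(i < 3) [:: f 0 1 1; f 0 0 3; f 0 4 0]%N`_i.

Lemma hcoordD f g : hcoord (f + g) = hcoord f + hcoord g.
Proof. by apply/rowP => -[[|[|[|//]]] i3]; rewrite !mxE. Qed.

Lemma hcoord_hcomb g1 g2 g3 :
  hcoord (hcomb g1 g2 g3) = \row_(i < 3) [:: g1 0 0 0; g2 0 0 0; g3 0 0 0]%N`_i.
Proof.
apply/rowP => -[[|[|[|//]]] i3]; rewrite !mxE /= /hcomb !addps3E !mulps3E;
  rewrite /ps3mul !big_ord_recr !big_ord0 /= /h1 /h2 /h3 /ps3add /mono3 /=; ring.
Qed.

Lemma const_ps3M f g : (f * g) 0%N 0%N 0%N = f 0%N 0%N 0%N * g 0%N 0%N 0%N.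
Proof. by rewrite mulps3E /ps3mul !big_ord1. Qed.

Lemma hcoord_mul_hcomb q g1 g2 g3 :
  hcoord (q * hcomb g1 g2 g3) = q 0%N 0%N 0%N *: hcoord (hcomb g1 g2 g3).
Proof.
have -> : q * hcomb g1 g2 g3 = hcomb (q * g1) (q * g2) (q * g3) by rewrite /hcomb; ring.
by rewrite !hcoord_hcomb; apply/rowP => -[[|[|[|//]]] i3]; rewrite !mxE /= const_ps3M.
Qed.

Lemma row_full_leq m n (A : 'M[K]_(m, n)) : row_full A -> (n <= m)%N.
Proof. by rewrite -col_leq_rank => /leq_trans; apply; apply: rank_leq_row. Qed.

Lemma P_not_2generated f1 f2 : 3%N \in [pchar K] ->
  ~ (forall f, inP f <-> exists g1 g2, f = g1 * f1 + g2 * f2).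
Proof.
move=> char3 gen.
have [[a1 [a2 [a3 f1E]]] [b1 [b2 [b3 f2E]]]] : (exists a1 a2 a3, f1 = hcomb a1 a2 a3) /\
    (exists b1 b2 b3, f2 = hcomb b1 b2 b3).
  by split; apply/(inP_hcombP _ char3)/gen; [exists 1, 0 | exists 0, 1]; ring.
pose A := col_mx (hcoord f1) (hcoord f2).
suff /row_full_leq : row_full A by [].
rewrite -sub1mx; apply/row_subP => i; rewrite row1.
pose e j : ps3 K := if i == j then 1 else 0.
have [q1 [q2 eE]] := (gen (hcomb (e 0) (e 1) (e 2))).1 (inP_hcomb char3 _ _ _).
have -> : 'e_i = hcoord (hcomb (e 0) (e 1) (e 2)).
  rewrite hcoord_hcomb; apply/rowP => j; rewrite !mxE /e.
  by case: i j {eE e} => [[|[|[|//]]] ?] [[|[|[|//]]] ?].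
rewrite eE hcoordD f1E f2E !hcoord_mul_hcomb -f1E -f2E.
by rewrite -!mul_scalar_mx -mul_row_col submxMl.
Qed.
End Generators.

Theorem mainTheorem7 (K : fieldType) (hchar : 3%N \in [pchar K]) :
  (forall f : ps3 K, inP f <->
     exists g1 g2 g3 : ps3 K,
       f = ps3add (ps3add (ps3mul g1 (h1 K)) (ps3mul g2 (h2 K))) (ps3mul g3 (h3 K)))
  /\
  ~ (exists f1 f2 : ps3 K, forall f : ps3 K, inP f <->
       exists g1 g2 : ps3 K, f = ps3add (ps3mul g1 f1) (ps3mul g2 f2)).
Proof.
split=> [f|[f1 [f2 gen]]]; first exact: inP_hcombP.
exact: (P_not_2generated hchar gen).
Qed.
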